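(* Cycle-CTL* (CTL*$_{cd}$) has neither the finite-model property nor the tree-model property, and it is not invariant under (ordinary) bisimulation. Precisely: (1) there is a satisfiable CTL*$_{cd}$ state formula that is not satisfied by any Kripke structure with finitely many worlds; (2) there is a satisfiable CTL*$_{cd}$ state formula $\varphi$ such that $\mathcal K\not\models\varphi$ for every Kripke structure $\mathcal K$ whose transition graph $(W,R)$ is a tree with root $w_I$; (3) there are Kripke structures $\mathcal K_1,\mathcal K_2$ and a bisimulation between them, and a CTL*$_{cd}$ state formula $\varphi$, such that $\mathcal K_1\models\varphi$ and $\mathcal K_2\not\models\varphi$.
   Context: A Kripke structure over a finite set $AP$ of atomic propositions is a tuple $\mathcal K=(AP,W,R,L,w_I)$ where $W$ is a countable non-empty set of worlds, $w_I\in W$ is the initial world, $R\subseteq W\times W$ is a left-total transition relation (every world has at least one $R$-successor), and $L:W\to 2^{AP}$ is a labelling function. A path is an infinite sequence $\pi=\pi_0\pi_1\cdots$ of worlds with $(\pi_i,\pi_{i+1})\in R$ for all $i\in\mathbb N$; $\mathrm{Pth}(w)$ is the set of paths with $\pi_0=w$. A path $\pi$ is a cycle if for every $i\in\mathbb N$ there is $j>i$ with $\pi_j=\pi_0$ (i.e. $\pi_0$ occurs infinitely often in $\pi$); $\mathrm{Cyc}(w)$ is the set of cycles with $\pi_0=w$. Syntax of CTL*$_{cd}$: state formulas $\varphi::=p\mid\neg\varphi\mid\varphi\wedge\varphi\mid\varphi\vee\varphi\mid \mathsf E\psi\mid\mathsf A\psi\mid\mathsf E^{c}\psi\mid\mathsf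 A^{c}\psi$ with $p\in AP$; path formulas $\psi::=\varphi\mid\neg\psi\mid\psi\wedge\psi\mid\psi\vee\psi\mid\mathsf X\psi\mid\psi\,\mathsf U\,\psi$. Semantics: $\mathcal K,w\models p$ iff $p\in L(w)$; Boolean connectives as usual; $\mathcal K,w\models\mathsf E\psi$ iff some $\pi\in\mathrm{Pth}(w)$ has $\mathcal K,\pi,0\models\psi$; $\mathcal K,w\models\mathsf A\psi$ iff every $\pi\in\mathrm{Pth}(w)$ has $\mathcal K,\pi,0\models\psi$; $\mathcal K,w\models\mathsf E^{c}\psi$ iff some $\pi\in\mathrm{Cyc}(w)$ has $\mathcal K,\pi,0\models\psi$; $\mathcal K,w\models\mathsf A^{c}\psi$ iff every $\pi\in\mathrm{Cyc}(w)$ has $\mathcal K,\pi,0\models\psi$. For paths: $\mathcal K,\pi,i\models\varphi$ (state formula) iff $\mathcal K,\pi_i\models\varphi$; Boolean connectives as usual; $\mathcal K,\pi,i\models\mathsf X\psi$ iff $\mathcal K,\pi,i+1\models\psi$; $\mathcal K,\pi,i\models\psi_1\mathsf U\psi_2$ iff there is $k\ge0$ with $\mathcal K,\pi,i+k\models\psi_2$ and $\mathcal K,\pi,i+j\models\psi_1$ for all $0\le j<k$. $\mathcal K\models\varphi$ iff $\mathcal K,w_I\models\varphi$. A state formula is satisfiable if $\mathcal K\models\varphi$ for some Kripke structure $\mathcal K$. CTL* is the fragment without $\mathsf E^c,\mathsf A^c$. A bisimulation between $\mathcal K_1=(AP,W_1,R_1,L_1,w_{I,1})$ and $\mathcal K_2=(AP,W_2,R_2,L_2,w_{I,2})$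 is a relation $B\subseteq W_1\times W_2$ with $(w_{I,1},w_{I,2})\in B$ such that for all $(w_1,w_2)\in B$: $L_1(w_1)=L_2(w_2)$; for every $R_1$-successor $v_1$ of $w_1$ there is an $R_2$-successor $v_2$ of $w_2$ with $(v_1,v_2)\in B$; and for every $R_2$-successor $v_2$ of $w_2$ there is an $R_1$-successor $v_1$ of $w_1$ with $(v_1,v_2)\in B$. *)

From Stdlib Require Import Arith List.
Import ListNotations.
Set Implicit Arguments.

Definition finite_type (T : Type) : Prop := exists l : list T, forall x : T, In x l.

Definition countable_type (T : Type) : Prop :=
  exists f : T -> nat, forall x y, f x = f y -> x = y.

Record Kripke (AP : Type) := mkKripke {
  W : Type;
  R : W -> W -> Prop;
  L : W -> AP -> bool;
  wI : W;
  W_countable : countable_type W;  (* W countable, non-empty since wI : W *)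
  R_total : forall w, exists v, R w v
}.
Arguments W {AP}. Arguments R {AP}. Arguments L {AP}. Arguments wI {AP}.

Inductive sform (AP : Type) : Type :=
| SAtom : AP -> sform AP
| SNeg : sform AP -> sform AP
| SAnd : sform AP -> sform AP -> sform AP
| SOr : sform AP -> sform AP -> sform AP
| SE : pform AP -> sform AP
| SA : pform AP -> sform AP
| SEc : pform AP -> sform AP
| SAc : pform AP -> sform AP
with pform (AP : Type) : Type :=
| PState : sform AP -> pform AP
| PNeg : pform AP -> pform AP
| PAnd : pform AP -> pform AP -> pform AP
| POr : pform AP -> pform AP -> pform AP
| PX : pform AP -> pform AP
| PU : pform AP -> pform AP -> pform AP.

Definition is_path {AP} (K : Kripke AP) (pi : nat -> W K) : Prop :=
  forall i, R K (pi i) (pi (S i)).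

Definition path_from {AP} (K : Kripke AP) (w : W K) (pi : nat -> W K) : Prop :=
  is_path K pi /\ pi 0 = w.

Definition cycle_from {AP} (K : Kripke AP) (w : W K) (pi : nat -> W K) : Prop :=
  path_from K w pi /\ forall i, exists j, i < j /\ pi j = pi 0.

Fixpoint sat_s {AP} (K : Kripke AP) (w : W K) (phi : sform AP) {struct phi} : Prop :=
  match phi with
  | SAtom p => L K w p = true
  | SNeg f => ~ sat_s K w f
  | SAnd f g => sat_s K w f /\ sat_s K w g
  | SOr f g => sat_s K w f \/ sat_s K w g
  | SE psi => exists pi, path_from K w pi /\ sat_p K pi 0 psi
  | SA psi => forall pi, path_from K w pi -> sat_p K pi 0 psi
  | SEc psi => exists pi, cycle_from K w pi /\ sat_p K pi 0 psi
  | SAc psi => forall pi, cycle_from K w pi -> sat_p K pi 0 psi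
  end
with sat_p {AP} (K : Kripke AP) (pi : nat -> W K) (i : nat) (psi : pform AP) {struct psi} : Prop :=
  match psi with
  | PState f => sat_s K (pi i) f
  | PNeg f => ~ sat_p K pi i f
  | PAnd f g => sat_p K pi i f /\ sat_p K pi i g
  | POr f g => sat_p K pi i f \/ sat_p K pi i g
  | PX f => sat_p K pi (S i) f
  | PU f g => exists k, sat_p K pi (i + k) g /\ forall j, j < k -> sat_p K pi (i + j) f
  end.

Definition models {AP} (K : Kripke AP) (phi : sform AP) : Prop := sat_s K (wI K) phi.

Definition satisfiable {AP} (phi : sform AP) : Prop := exists K : Kripke AP, models K phi.

Definition finite_kripke {AP} (K : Kripke AP) : Prop := finite_type (W K).

Fixpoint fpath {AP} (K : Kripke AP) (x : W K) (l : list (W K)) (y : W K) : Prop :=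
  match l with
  | [] => x = y
  | z :: l' => R K x z /\ fpath K z l' y
  end.

Definition tree_kripke {AP} (K : Kripke AP) : Prop :=
  forall w : W K, exists! l : list (W K), fpath K (wI K) l w.

Definition bisimulation {AP} (K1 K2 : Kripke AP) (B : W K1 -> W K2 -> Prop) : Prop :=
  B (wI K1) (wI K2) /\
  forall w1 w2, B w1 w2 ->
    (forall p, L K1 w1 p = L K2 w2 p) /\
    (forall v1, R K1 w1 v1 -> exists v2, R K2 w2 v2 /\ B v1 v2) /\
    (forall v2, R K2 w2 v2 -> exists v1, R K1 w1 v1 /\ B v1 v2).

From Stdlib Require Import Arith List Lia Classical ClassicalEpsilon.
Import ListNotations.

(* All three counterexamples use the formula [on_cycle] := E^c true, which says
   that the current world lies on a cycle.  On the one-world loop it holds, on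
   the bisimilar successor chain of the naturals it fails, and at the root of a
   tree it fails since the root has no predecessor.  Finally, every infinite path
   through a finite structure visits some world infinitely often, so from that
   world on it is a cycle; hence AG ~on_cycle, which holds on the chain of the
   naturals, has no finite model. *)

Definition s_true : sform unit := SOr (SAtom tt) (SNeg (SAtom tt)).

Definition on_cycle : sform unit := SEc (PState s_true).

Definition never_on_cycle : sform unit :=
  SNeg (SE (PU (PState s_true) (PState on_cycle))).

Lemma sat_true (K : Kripke unit) (w : W K) : sat_s K w s_true.
Proof. simpl. destruct (L K w tt); auto. Qed.

Lemma sat_on_cycle (K : Kripke unit) (w : W K) :
  sat_s K w on_cycle <-> exists pi, cycle_from K w pi.
Proof.
  split.
  - intros [pi [Hpi _]]. exists pi. exact Hpi.
  - intros [pi Hpi]. exists pi. split; [exact Hpi | apply sat_true].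
Qed.

Definition shift {T} (pi : nat -> T) (j : nat) : nat -> T := fun k => pi (j + k).

Lemma is_path_shift {AP} (K : Kripke AP) (pi : nat -> W K) (j : nat) :
  is_path K pi -> is_path K (shift pi j).
Proof. intros Hp i. unfold shift. rewrite <- plus_n_Sm. apply Hp. Qed.

Lemma exists_path_from {AP} (K : Kripke AP) (w : W K) :
  exists pi, path_from K w pi.
Proof.
  set (next := fun v => proj1_sig (constructive_indefinite_description _ (R_total K v))).
  set (pi := fix pi n := match n with 0 => w | S n' => next (pi n') end).
  exists pi. split; [| reflexivity].
  intro i. exact (proj2_sig (constructive_indefinite_description _ (R_total K (pi i)))).
Qed.

(* Pigeonhole principle for infinite sequences, by induction on the enumerating
   list: either its head recurs, or from some point on the tail suffices. *)
Lemma recurrent_value_in_list {T} (pi : nat -> T) (l : list T) :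
  (forall n, exists j, n <= j /\ In (pi j) l) ->
  exists v, forall n, exists j, n <= j /\ pi j = v.
Proof.
  induction l as [|a l IH]; intros Hl.
  - destruct (Hl 0) as [j [_ []]].
  - destruct (classic (forall n, exists j, n <= j /\ pi j = a)) as [Ha|Ha].
    + exists a. exact Ha.
    + apply not_all_ex_not in Ha as [n0 Hn0].
      apply IH. intros n. destruct (Hl (max n n0)) as [j [Hj [Hin|Hin]]].
      * exfalso. apply Hn0. exists j. split; [lia | symmetry; exact Hin].
      * exists j. split; [lia | exact Hin].
Qed.

Lemma finite_recurrent_value {T} (pi : nat -> T) :
  finite_type T -> exists v, forall n, exists j, n <= j /\ pi j = v.
Proof.
  intros [l Hl]. apply (recurrent_value_in_list pi l).
  intros n. exists n. split; [lia | apply Hl].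
Qed.

Lemma recurrent_suffix_cycle {AP} (K : Kripke AP) (pi : nat -> W K) (v : W K) :
  is_path K pi -> (forall n, exists j, n <= j /\ pi j = v) ->
  exists j, cycle_from K v (shift pi j).
Proof.
  intros Hp Hv. destruct (Hv 0) as [j0 [_ Hj0]].
  exists j0. unfold shift. split.
  - split; [apply is_path_shift; exact Hp | rewrite Nat.add_0_r; exact Hj0].
  - intros i. destruct (Hv (j0 + S i)) as [j [Hj Hpj]].
    exists (j - j0). split; [lia |].
    replace (j0 + (j - j0)) with j by lia. rewrite Nat.add_0_r. congruence.
Qed.

Lemma finite_reaches_cycle (K : Kripke unit) :
  finite_kripke K -> exists pi j, path_from K (wI K) pi /\ sat_s K (pi j) on_cycle.
Proof.
  intros Hfin. destruct (exists_path_from K (wI K)) as [pi [Hp H0]].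
  destruct (finite_recurrent_value pi Hfin) as [v Hv].
  destruct (recurrent_suffix_cycle K pi v Hp Hv) as [j Hj].
  destruct (Hv j) as [j' [_ Hj']].
  exists pi, j'. split; [split; assumption |].
  apply sat_on_cycle. exists (shift pi j). congruence.
Qed.

Lemma finite_not_never_on_cycle (K : Kripke unit) :
  finite_kripke K -> ~ models K never_on_cycle.
Proof.
  intros Hfin Hm. apply Hm.
  destruct (finite_reaches_cycle K Hfin) as [pi [j [Hpi Hj]]].
  exists pi. split; [exact Hpi |].
  exists j. split; [exact Hj | intros; apply sat_true].
Qed.

Lemma fpath_snoc {AP} (K : Kripke AP) x l y z :
  fpath K x l y -> R K y z -> fpath K x (l ++ [z]) z.
Proof.
  revert x; induction l as [|a l IH]; simpl; intros x H Hr.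
  - subst. auto.
  - destruct H as [H1 H2]. split; auto.
Qed.

(* An edge into the root would give it a second path from itself besides []. *)
Lemma tree_root_no_pred {AP} (K : Kripke AP) :
  tree_kripke K -> forall v, ~ R K v (wI K).
Proof.
  intros T v Hv.
  destruct (T v) as [l [Hl _]].
  destruct (T (wI K)) as [l0 [_ Hu]].
  assert (E1 : l0 = []) by (apply Hu; reflexivity).
  assert (E2 : l0 = l ++ [wI K]) by (apply Hu; apply fpath_snoc with v; auto).
  rewrite E1 in E2. destruct l; discriminate.
Qed.

Lemma tree_root_no_cycle {AP} (K : Kripke AP) :
  tree_kripke K -> forall pi, ~ cycle_from K (wI K) pi.
Proof.
  intros T pi [[Hp H0] Hc].
  destruct (Hc 0) as [[|j] [Hj Hret]]; [lia |].
  apply (tree_root_no_pred K T (pi j)). rewrite <- H0, <- Hret. apply Hp.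
Qed.

Lemma full_relation_bisimulation {AP} (K1 K2 : Kripke AP) :
  (forall w1 w2 p, L K1 w1 p = L K2 w2 p) -> bisimulation K1 K2 (fun _ _ => True).
Proof.
  intros HL. split; [exact I |]. intros w1 w2 _. split; [apply HL |]. split.
  - intros v1 _. destruct (R_total K2 w2) as [v2 Hv2]. exists v2. auto.
  - intros v2 _. destruct (R_total K1 w1) as [v1 Hv1]. exists v1. auto.
Qed.

Definition loop_kripke : Kripke unit :=
  @mkKripke unit unit (fun _ _ => True) (fun _ _ => true) tt
    (ex_intro _ (fun _ => 0) (fun x y _ => match x, y with tt, tt => eq_refl end))
    (fun _ => ex_intro _ tt I).

Definition nat_chain_kripke : Kripke unit :=
  @mkKripke unit nat (fun n m => m = S n) (fun _ _ => true) 0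
    (ex_intro _ (fun n => n) (fun _ _ H => H))
    (fun n => ex_intro _ (S n) eq_refl).

Lemma loop_on_cycle : models loop_kripke on_cycle.
Proof.
  apply sat_on_cycle. exists (fun _ => tt).
  split; [split; [intro; exact I | reflexivity] |].
  intros i. exists (S i). split; [lia | reflexivity].
Qed.

Lemma nat_chain_no_cycle (n : nat) (pi : nat -> nat) :
  ~ cycle_from nat_chain_kripke n pi.
Proof.
  intros [[Hp _] Hc].
  assert (Hpi : forall j, pi j = pi 0 + j)
    by (induction j; [lia | rewrite (Hp j); simpl in *; lia]).
  destruct (Hc 0) as [j [Hj Hret]]. rewrite Hpi in Hret. lia.
Qed.

Lemma nat_chain_never_on_cycle : models nat_chain_kripke never_on_cycle.
Proof.
  intros [pi [_ [k [Hk _]]]].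
  apply sat_on_cycle in Hk as [rho Hrho]. exact (nat_chain_no_cycle _ _ Hrho).
Qed.

Theorem mainTheorem1 :
  (exists (AP : Type) (phi : sform AP), finite_type AP /\ satisfiable phi /\
     forall K : Kripke AP, finite_kripke K -> ~ models K phi) /\
  (exists (AP : Type) (phi : sform AP), finite_type AP /\ satisfiable phi /\
     forall K : Kripke AP, tree_kripke K -> ~ models K phi) /\
  (exists (AP : Type) (K1 K2 : Kripke AP) (B : W K1 -> W K2 -> Prop) (phi : sform AP),
     finite_type AP /\ bisimulation K1 K2 B /\ models K1 phi /\ ~ models K2 phi).
Proof.
  assert (Hunit : finite_type unit) by (exists [tt]; intros []; simpl; auto).
  split; [| split].
  - exists unit, never_on_cycle. split; [exact Hunit | split].
    + exists nat_chain_kripke. exact nat_chain_never_on_cycle.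
    + exact finite_not_never_on_cycle.
  - exists unit, on_cycle. split; [exact Hunit | split].
    + exists loop_kripke. exact loop_on_cycle.
    + intros K T Hm. apply sat_on_cycle in Hm as [pi Hpi].
      exact (tree_root_no_cycle K T pi Hpi).
  - exists unit, loop_kripke, nat_chain_kripke, (fun _ _ => True), on_cycle.
    split; [exact Hunit | split; [| split]].
    + apply full_relation_bisimulation. reflexivity.
    + exact loop_on_cycle.
    + intros Hm. apply sat_on_cycle in Hm as [pi Hpi].
      exact (nat_chain_no_cycle _ _ Hpi).
Qed.
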